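(* Let $T$ be a commutative ring with identity, $S$ a unital subring and $I$ a nil ideal of $T$ with $T=S+I$ and $S\cap I=\{0\}$. Then $T$ is roughly complemented if and only if for each $s\in S$ and $i\in I$ there are $t\in S$ and $j\in I$ such that $st=0$, $s+t\in\mathrm{areg}(S)$, and $(s+i)j=it$. In particular, if $T$ is roughly complemented, then $S$ is roughly complemented.
   Context: For a ring $A$: $\mathfrak{N}(A)$ is the nilradical, $\mathrm{reg}(A)$ the regular elements, $\mathrm{areg}(A)=\{x: x+\mathfrak{N}(A)\in\mathrm{reg}(A/\mathfrak{N}(A))\}$. An element $a\in A$ is roughly complemented if there is $b\in A$ with $ab=0$ and $a+b\in\mathrm{areg}(A)$; $A$ is roughly complemented if every element is. *)

From HB Require Import structures.
From mathcomp Require Import all_boot all_order all_algebra.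
Set Implicit Arguments. Unset Strict Implicit. Unset Printing Implicit Defensive.
Import GRing.Theory.
Local Open Scope ring_scope.

Definition nilpotentr (A : comPzRingType) (x : A) : Prop := exists n : nat, x ^+ n = 0.

(* x in the subring S is "almost regular" in S: x + N(S) is a regular element
   of S/N(S), i.e. for y in S, x*y in N(S) implies y in N(S).  Nilpotency in S
   coincides with nilpotency in the ambient ring. *)
Definition areg_in (A : comPzRingType) (S : {pred A}) (x : A) : Prop :=
  x \in S /\ forall y, y \in S -> nilpotentr (x * y) -> nilpotentr y.

Definition areg (A : comPzRingType) (x : A) : Prop :=
  forall y : A, nilpotentr (x * y) -> nilpotentr y.

Definition roughly_complemented (A : comPzRingType) : Prop :=
  forall a : A, exists b : A, a * b = 0 /\ areg (a + b).

Definition roughly_complemented_in (A : comPzRingType) (S : {pred A}) : Prop :=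
  forall a, a \in S -> exists b, b \in S /\ a * b = 0 /\ areg_in S (a + b).

Definition nil_ideal (A : comPzRingType) (I : {pred A}) : Prop :=
  [/\ 0 \in I, {in I &, forall u v, u - v \in I},
      (forall t u, u \in I -> t * u \in I) & {in I, forall u, nilpotentr u}].

(* Nilpotency, and hence almost-regularity, only depends on an element modulo
   the nil ideal I.  As T = S (+) I, a complement of s + i can be written
   t - j with t in S and j in I: then s + i + (t - j) is almost regular iff
   s + t is, and (s + i)(t - j) = 0 splits into its S-component s t = 0 and
   the remaining equation (s + i) j = i t. *)

From HB Require Import structures.
From mathcomp Require Import all_boot all_order all_algebra.
From mathcomp Require Import ring.
Set Implicit Arguments. Unset Strict Implicit. Unset Printing Implicit Defensive.
Import GRing.Theory.
Local Open Scope ring_scope.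

Lemma nilpotentrX (A : comPzRingType) (x : A) n :
  nilpotentr (x ^+ n) -> nilpotentr x.
Proof. by case=> m xnm0; exists (n * m)%N; rewrite exprM. Qed.

Section NilIdeal.
Variables (T : comPzRingType) (I : {pred T}).
Hypothesis nilI : nil_ideal I.

Let zmodI : GRing.zmod_closed I. Proof. by case: nilI. Qed.
HB.instance Definition _ := GRing.isZmodClosed.Build T I zmodI.

Lemma idealMl t u : u \in I -> t * u \in I.
Proof. by case: nilI => _ _ + _; apply. Qed.

Lemma idealMr t u : u \in I -> u * t \in I.
Proof. by rewrite mulrC; apply: idealMl. Qed.

Lemma nilpotentr_ideal u : u \in I -> nilpotentr u.
Proof. by case: nilI => _ _ _; apply. Qed.

Lemma subrXD_ideal x k n : k \in I -> (x + k) ^+ n - x ^+ n \in I.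
Proof.
move=> Ik; elim: n => [|n IHn]; first by rewrite !expr0 subrr rpred0.
have -> : (x + k) ^+ n.+1 - x ^+ n.+1 =
          (x + k) * ((x + k) ^+ n - x ^+ n) + x ^+ n * k by rewrite !exprS; ring.
by rewrite rpredD ?idealMl.
Qed.

Lemma nilpotentrD_ideal x k : k \in I -> nilpotentr x -> nilpotentr (x + k).
Proof.
move=> Ik [n xn0]; apply: (@nilpotentrX _ _ n); apply: nilpotentr_ideal.
by rewrite -[_ ^+ n]subr0 -xn0 subrXD_ideal.
Qed.

Lemma nilpotentr_addr x k : k \in I -> nilpotentr (x + k) <-> nilpotentr x.
Proof.
move=> Ik; split; last exact: nilpotentrD_ideal.
have INk : - k \in I by rewrite rpredN.
by move=> /(nilpotentrD_ideal INk); rewrite addrK.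
Qed.

Lemma areg_addr x k : k \in I -> areg (x + k) <-> areg x.
Proof.
move=> Ik; have nilE y : nilpotentr ((x + k) * y) <-> nilpotentr (x * y).
  by rewrite mulrDl; apply: nilpotentr_addr; apply: idealMr.
by split=> xreg y /nilE; apply: xreg.
Qed.

End NilIdeal.

Section DirectSum.
Variables (T : comPzRingType) (S I : {pred T}).
Hypotheses (subS : GRing.subring_closed S) (nilI : nil_ideal I).
Hypothesis sumSI : forall x : T, exists s i, [/\ s \in S, i \in I & x = s + i].
Hypothesis capSI : forall x : T, x \in S -> x \in I -> x = 0.

Let zmodI : GRing.zmod_closed I. Proof. by case: nilI. Qed.
HB.instance Definition _ := GRing.isZmodClosed.Build T I zmodI.
HB.instance Definition _ := GRing.isSubringClosed.Build T S subS.

Lemma areg_inE x : x \in S -> areg_in S x <-> areg x.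
Proof.
move=> Sx; split=> [[_ xreg] y|xreg]; last by split=> // y _; apply: xreg.
have [s [i [Ss Ii ->]]] := sumSI y.
rewrite mulrDr !(nilpotentr_addr nilI) ?(idealMl nilI) //; exact: xreg.
Qed.

Lemma areg_in_addr s k : s \in S -> k \in I -> areg_in S s <-> areg (s + k).
Proof. by move=> Ss Ik; rewrite (areg_addr nilI) // areg_inE. Qed.

Lemma complement_split s i t j : s \in S -> i \in I -> t \in S -> j \in I ->
  (s + i) * (t - j) = 0 -> s * t = 0 /\ (s + i) * j = i * t.
Proof.
move=> Ss Ii St Ij prod0.
have parts : (s + i) * j - i * t = s * t - (s + i) * (t - j) by ring.
have st0 : s * t = 0.
  apply: capSI; first exact: rpredM.
  rewrite -[s * t]subr0 -prod0 -parts rpredB //.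
  - exact: (idealMl nilI).
  - exact: (idealMr nilI).
by split=> //; apply/subr0_eq; rewrite parts st0 prod0 subrr.
Qed.

Lemma roughly_complemented_decomp : roughly_complemented T ->
  forall s i, s \in S -> i \in I ->
    exists t j, [/\ t \in S, j \in I, s * t = 0, areg_in S (s + t)
                  & (s + i) * j = i * t].
Proof.
move=> rcT s i Ss Ii; have [b [prod0 reg]] := rcT (s + i).
have [t [k [St Ik eb]]] := sumSI b; rewrite {b}eb in prod0 reg.
exists t, (- k); rewrite -[k]opprK in prod0.
have INk : - k \in I by rewrite rpredN.
have [st0 sik] := complement_split Ss Ii St INk prod0.
split=> //.
by apply/(areg_in_addr (rpredD Ss St) (rpredD Ii Ik)); rewrite -addrACA.
Qed.

Lemma roughly_complemented_of_decomp :
  (forall s i, s \in S -> i \in I ->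
    exists t j, [/\ t \in S, j \in I, s * t = 0, areg_in S (s + t)
                  & (s + i) * j = i * t]) ->
  roughly_complemented T.
Proof.
move=> decomp a; have [s [i [Ss Ii ->]]] := sumSI a.
have [t [j [St Ij st0 reg sij]]] := decomp s i Ss Ii.
exists (t - j); split; first by rewrite mulrBr sij mulrDl st0 add0r subrr.
by rewrite addrACA; apply/(areg_in_addr (rpredD Ss St) (rpredB Ii Ij)).
Qed.

End DirectSum.

Theorem mainTheorem17 (T : comPzRingType) (S I : {pred T})
  (hS : GRing.subring_closed S) (hI : nil_ideal I)
  (hsum : forall x : T, exists s i, [/\ s \in S, i \in I & x = s + i])
  (hcap : forall x : T, x \in S -> x \in I -> x = 0) :
  (roughly_complemented T <->
     (forall s i, s \in S -> i \in I ->
        exists t j, [/\ t \in S, j \in I, s * t = 0, areg_in S (s + t)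
                      & (s + i) * j = i * t]))
  /\ (roughly_complemented T -> roughly_complemented_in S).
Proof.
have decomp := roughly_complemented_decomp hS hI hsum hcap.
split; first by split; [exact: decomp | exact: roughly_complemented_of_decomp].
move=> rcT s Ss; have I0 : 0 \in I by case: hI.
by have [t [_ [St _ st0 reg _]]] := decomp rcT s 0 Ss I0; exists t.
Qed.
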